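(* For every tree $G$ on $n$ vertices there exists a valid search tree $P$ on $G$ which is Steiner-closed and has height at most $2\log_2 n+2$.
   Context: Search tree on a tree: a rooted tree $T$ is a valid search tree on an unrooted tree $G$ if the root $r$ of $T$ is a vertex of $G$ and the subtrees of $T\setminus r$ are valid search trees on the connected components of $G\setminus r$. Height is the maximum number of nodes on a root-to-leaf path. For vertices $a,b$ of $G$, $P(a,b)$ is the vertex set of the path from $a$ to $b$ in $G$. Convex hull: for $S\subseteq V(G)$, $\mathrm{CH}(S)$ is the subgraph of $G$ induced by $\bigcup_{a,b\in S}P(a,b)$. A set $S$ is Steiner-closed (with respect to $G$) if every vertex of $\mathrm{CH}(S)\setminus S$ has degree exactly $2$ in $\mathrm{CH}(S)$. A search tree $T$ of $G$ is Steiner-closed if for every node $v$ of $T$, the set of nodes on the path in $T$ from the root to $v$ is a Steiner-closed set with respect to $G$. *)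

From Stdlib Require Import Reals.
From HB Require Import structures.
From mathcomp Require Import all_boot.
Set Implicit Arguments. Unset Strict Implicit. Unset Printing Implicit Defensive.

Section Defs.
Variable V : finType.

Definition simple_graph (e : rel V) : Prop :=
  symmetric e /\ irreflexive e.

Definition acyclic (e : rel V) : Prop :=
  forall c : seq V, 3 <= size c -> uniq c -> ~~ cycle e c.

Definition is_tree (e : rel V) : Prop :=
  simple_graph e /\ (forall x y, connect e x y) /\ acyclic e.

Definition induced (e : rel V) (A : {set V}) : rel V :=
  [rel x y | [&& x \in A, y \in A & e x y]].

Definition comp (e : rel V) (A : {set V}) (x : V) : {set V} :=
  [set y in A | connect (induced e A) x y].

Definition components (e : rel V) (A : {set V}) : {set {set V}} :=
  [set comp e A x | x in A].

Inductive stree : Type := Node of V & list stree.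

Fixpoint nodes (t : stree) : {set V} :=
  match t with
  | Node r ch =>
      r |: (fix go (l : list stree) : {set V} :=
              match l with nil => set0 | c :: l' => nodes c :|: go l' end) ch
  end.

(* height = maximum number of nodes on a root-to-leaf path *)
Fixpoint height (t : stree) : nat :=
  match t with
  | Node r ch =>
      ((fix go (l : list stree) : nat :=
         match l with nil => 0 | c :: l' => maxn (height c) (go l') end) ch).+1
  end.

(* valid search tree on G[S] (S the vertex set of a connected subgraph):
   the root r lies in S, and the subtrees of T \ r are valid search trees
   on the connected components of G[S \ r], one subtree per component. *)
Inductive valid_stree (e : rel V) : {set V} -> stree -> Prop :=
| valid_Node (S : {set V}) (r : V) (ch : list stree) :
    r \in S ->
    (forall c, List.In c ch -> valid_stree e (nodes c) c) ->
    uniq (map nodes ch) ->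
    (forall X : {set V}, X \in map nodes ch <-> X \in components e (S :\ r)) ->
    valid_stree e S (Node r ch).

(* x lies on the (unique, G being a tree) path from a to b in G *)
Definition on_path (e : rel V) (a b x : V) : Prop :=
  exists p : seq V, [/\ path e a p, last a p = b, uniq (a :: p) & x \in a :: p].

Definition in_hull (e : rel V) (S : {set V}) (x : V) : Prop :=
  exists a b, [/\ a \in S, b \in S & on_path e a b x].

Definition hull_deg2 (e : rel V) (S : {set V}) (x : V) : Prop :=
  exists y1 y2, [/\ y1 != y2,
                    e x y1 /\ in_hull e S y1,
                    e x y2 /\ in_hull e S y2 &
                    forall y, e x y -> in_hull e S y -> y = y1 \/ y = y2].

Definition steiner_closed (e : rel V) (S : {set V}) : Prop :=
  forall x, in_hull e S x -> x \notin S -> hull_deg2 e S x.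

(* every root-to-node path of the search tree is a Steiner-closed set;
   A is the set of labels of the strict ancestors of the current node *)
Fixpoint stc_from (e : rel V) (A : {set V}) (t : stree) : Prop :=
  match t with
  | Node r ch =>
      steiner_closed e (r |: A) /\
      (fix go (l : list stree) : Prop :=
         match l with nil => True | c :: l' => stc_from e (r |: A) c /\ go l' end) ch
  end.

Definition steiner_closed_stree (e : rel V) (t : stree) : Prop :=
  stc_from e set0 t.

End Defs.

Definition log2R (x : R) : R := Rdiv (ln x) (ln (INR 2)).

From Pilot Require Import Defs.
From Stdlib Require Import Reals Lra.
From HB Require Import structures.
From mathcomp Require Import all_boot zify.
Set Implicit Arguments. Unset Strict Implicit. Unset Printing Implicit Defensive.

(* The search tree is built top-down.  At a node whose strict ancestors form
   the set A, the subtree has to be a search tree on a connected component C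
   of G - A.  We maintain the invariant that A is admissible: every component
   of G - A is adjacent to at most two vertices of A.  Since G is a tree, an
   admissible set is Steiner-closed (a hull vertex x outside A with three hull
   neighbours would see three distinct boundary vertices of its component).

   The root r of C is chosen so that admissibility is preserved and the
   potential 2 log|C| + (2 if C has two boundary vertices, 1 otherwise) drops:
   - if C has at most one boundary vertex, r is a centroid of C, so every
     component of C - r has at most |C|/2 vertices;
   - if C has two boundary vertices, attached at a, b in C, r is a median of
     a and b: it separates them, and every component of C - r either has at
     most |C|/2 vertices or misses a and b, and is then adjacent to r only.
   Centroid and median are both obtained by minimising the size of the
   largest component of C - r, using that moving r towards a component of
   more than |C|/2 vertices makes the largest component smaller.

   At the top level A is empty and has no boundary, so the height of the
   tree is at most 2 log2 n + 1. *)

(* Connectivity inside induced subgraphs of a symmetric graph. *)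
Section InducedConnectivity.
Variables (V : finType) (e : rel V).
Hypothesis esym : symmetric e.

Local Notation ind := (induced e).
Local Notation cmp := (Defs.comp e).
Implicit Types (A B C : {set V}) (x y u v w r : V).

Lemma ind_sub A : subrel (ind A) e.
Proof. by move=> x y /and3P[]. Qed.

Lemma connC A x y : connect (ind A) x y = connect (ind A) y x.
Proof.
by apply: sym_connect_sym => u v; rewrite /induced /= esym andbCA.
Qed.

Lemma path_restrict B u p :
  path e u p -> all (mem B) (u :: p) -> path (ind B) u p.
Proof.
elim: p u => //= v p IH u /andP[euv pv] /and3P[uB vB allp].
by rewrite /induced /= uB vB euv /= IH //= vB.
Qed.

Lemma path_ind_mem A u p : path (ind A) u p -> all (mem A) p.
Proof.
by elim: p u => //= v p IH u /andP[/and3P[_ vA _] /IH]; rewrite vA.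
Qed.

Lemma connect_mono A B x y :
  A \subset B -> connect (ind A) x y -> connect (ind B) x y.
Proof.
move=> /subsetP AB; apply: connect_sub => u v /and3P[uA vA euv].
by apply: connect1; rewrite /induced /= AB // AB.
Qed.

Lemma conn_memL A x y : connect (ind A) x y -> x != y -> x \in A.
Proof.
case/connectP=> [[|z p]] /=; first by move=> _ ->; rewrite eqxx.
by case/andP=> /and3P[].
Qed.

Lemma conn_memR A x y : connect (ind A) x y -> x != y -> y \in A.
Proof. by rewrite connC eq_sym; apply: conn_memL. Qed.

Lemma in_comp A x y : (y \in cmp A x) = (y \in A) && connect (ind A) x y.
Proof. by rewrite inE. Qed.

Lemma comp_sub A x : cmp A x \subset A.
Proof. by apply/subsetP=> y; rewrite in_comp => /andP[]. Qed.

Lemma comp_id A x : x \in A -> x \in cmp A x.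
Proof. by move=> xA; rewrite in_comp xA connect0. Qed.

Lemma comp_memx A x y : y \in cmp A x -> x \in A.
Proof.
rewrite in_comp => /andP[yA c]; have [->//|ne] := eqVneq x y.
exact: conn_memL c ne.
Qed.

Lemma comp_eq A x y : y \in cmp A x -> cmp A y = cmp A x.
Proof.
rewrite in_comp => /andP[yA cxy]; apply/setP=> z; rewrite !in_comp.
case: (z \in A) => //=; apply/idP/idP => [cyz|cxz].
  exact: connect_trans cxy cyz.
by apply: connect_trans cxz; rewrite connC.
Qed.

Lemma comp_sym A x y : y \in cmp A x -> x \in cmp A y.
Proof. by move=> h; rewrite (comp_eq h) comp_id // (comp_memx h). Qed.

Lemma comp_edge A x u v : u \in cmp A x -> v \in A -> e u v -> v \in cmp A x.
Proof.
rewrite !in_comp => /andP[uA cxu] vA euv; rewrite vA /=.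
by apply: connect_trans cxu (connect1 _); rewrite /induced /= uA vA.
Qed.

(* A connection in G[A] stays inside the component, hence inside any B
   containing that component. *)
Lemma connect_restrict A B x y :
  connect (ind A) x y -> cmp A x \subset B -> connect (ind B) x y.
Proof.
move=> cxy /subsetP sB; have [->|ne] := eqVneq x y; first exact: connect0.
have xA := conn_memL cxy ne.
case/connectP: cxy => p pth ->; apply/connectP; exists p => //.
apply: path_restrict; first exact: sub_path (@ind_sub A) _ _ pth.
apply/allP=> z zp; apply: sB; rewrite in_comp (path_connect pth zp) andbT.
have [<-//|nz] := eqVneq x z; exact: conn_memR (path_connect pth zp) nz.
Qed.

Lemma comp_restrict A x r : r \notin cmp A x -> cmp A x = cmp (A :\ r) x.
Proof.
move=> rn; have sub : cmp A x \subset A :\ r.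
  apply/subsetP=> z zc; rewrite in_setD1 (subsetP (comp_sub _ _) _ zc) andbT.
  by apply: contraNneq rn => <-.
apply/setP=> y; apply/idP/idP => [yc|].
  rewrite in_comp (subsetP sub _ yc); apply: connect_restrict sub.
  by move: yc; rewrite in_comp => /andP[].
rewrite !in_comp => /andP[]; rewrite in_setD1 => /andP[_ ->] /=.
exact/connect_mono/subsetDl.
Qed.

Definition conn (C : {set V}) :=
  forall u v, u \in C -> v \in C -> connect (ind C) u v.

Lemma comp_conn A x : conn (cmp A x).
Proof.
move=> u v uc vc; have: connect (ind A) u v.
  move: uc vc; rewrite !in_comp => /andP[_ cu] /andP[_ cv].
  by apply: connect_trans cv; rewrite connC.
by move/connect_restrict; apply; rewrite (comp_eq uc).
Qed.

(* The first edge of a shortest path from x to y in G[A]. *)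
Lemma first_step A x y : connect (ind A) x y -> x != y ->
  exists w, [/\ e x w, w \in A & connect (ind (A :\ x)) w y].
Proof.
case/connectP=> p pth yl ne; case: (shortenP pth) yl => p' pth' up' _ yl.
case: p' pth' up' yl => [|w p'] pth' up' yl; first by rewrite yl eqxx in ne.
move: pth' => /= /andP[/and3P[xA wA exw] pth'].
exists w; split => //; apply/connectP; exists p' => //.
apply: path_restrict; first exact: sub_path (@ind_sub A) _ _ pth'.
apply/allP=> z zin; change (z \in A :\ x); rewrite in_setD1.
have -> : z \in A by case/predU1P: zin => [->//|]; apply: (allP (path_ind_mem pth')).
by rewrite andbT; apply: contraTneq zin => ->; move: up' => /= /andP[].
Qed.

Lemma componentsP A K : K \in components e A -> exists2 x, x \in A & K = cmp A x.
Proof. by case/imsetP=> x xA ->; exists x. Qed.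

Lemma comp_components A x : x \in A -> cmp A x \in components e A.
Proof. by move=> xA; apply: imset_f. Qed.

Lemma setC_U1 r A : ~: (r |: A) = (~: A) :\ r.
Proof. by apply/setP => z; rewrite !inE negb_or andbC. Qed.

Lemma comp_child A x0 r y : r \in cmp (~: A) x0 -> y \in cmp (~: A) x0 :\ r ->
  cmp (~: (r |: A)) y = cmp (cmp (~: A) x0 :\ r) y.
Proof.
set D := ~: A; set C := cmp D x0 => rC yC.
have yC' : y \in C by move: yC; rewrite in_setD1 => /andP[].
have sub : cmp (D :\ r) y \subset C :\ r.
  apply/subsetP => t; rewrite in_comp => /andP[tD cyt].
  rewrite in_setD1; move: tD; rewrite in_setD1 => /andP[-> tD] /=.
  rewrite /C -(comp_eq yC') in_comp tD /=.
  exact: connect_mono (subsetDl _ _) cyt.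
rewrite setC_U1; apply/setP => z; apply/idP/idP => zc.
  rewrite in_comp (subsetP sub _ zc) /=; apply: connect_restrict sub.
  by move: zc; rewrite in_comp => /andP[].
move: zc; rewrite !in_comp => /andP[zC c]; apply/andP; split.
  by move: zC; rewrite !in_setD1 => /andP[-> /(subsetP (comp_sub _ _))].
apply: connect_mono c; apply: setSD; exact: comp_sub.
Qed.

End InducedConnectivity.

Arguments in_comp {V e} A x y.
Arguments comp_sub {V e} A x.
Arguments comp_id {V e A x}.
Arguments comp_components {V e A x}.
Arguments comp_conn {V e} esym A x u v.

(* Centroids and medians of a subtree of a forest. *)
Section Subtrees.
Variables (V : finType) (e : rel V).
Hypotheses (esym : symmetric e) (eirr : irreflexive e) (eacy : acyclic e).

Local Notation ind := (induced e).
Local Notation cmp := (Defs.comp e).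
Local Notation conn := (conn e).
Implicit Types (A C K : {set V}) (x y u v w r : V).

(* In a forest, two distinct neighbours of r are disconnected in G - r (in
   any induced subgraph avoiding r): a connecting path would close a cycle. *)
Lemma no_two_nbrs A r u v :
  r \notin A -> e r u -> e r v -> u != v -> ~~ connect (ind A) u v.
Proof.
move=> rA eru erv neq; apply/negP; case/connectP=> p pth vl.
case: (shortenP pth) vl => [[|w p'] pth' up' _ vl]; first by rewrite /= vl eqxx in neq.
have allA := path_ind_mem pth'; have /= /andP[/and3P[uA _ _] _] := pth'.
have : ~~ cycle e [:: r, u, w & p'].
  apply: eacy => //=; rewrite /= in up'; rewrite up' andbT inE negb_or.
  apply/andP; split; first by apply: contraNneq rA => ->.
  by apply: contra rA => /(allP allA).
apply/negP; move: (sub_path (@ind_sub _ e A) pth') => /= /andP[-> h].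
by rewrite eru rcons_path h /= negbK esym -[last _ _]/(last u (w :: p')) -vl.
Qed.

Lemma comp_has_nbr C r y : conn C -> r \in C -> y \in C :\ r ->
  exists2 w, w \in cmp (C :\ r) y & e r w.
Proof.
move=> cC rC yC; have ry : r != y by move: yC; rewrite in_setD1 eq_sym => /andP[].
have [w [erw wC cw]] := first_step (cC _ _ rC (subsetP (subsetDl _ _) _ yC)) ry.
exists w => //; rewrite in_comp (connC esym) cw andbT in_setD1 wC andbT.
by apply: contraTneq erw => ->; rewrite eirr.
Qed.

Lemma comp_away_from_root C r K k0 r' y : conn C -> r \in C ->
  K = cmp (C :\ r) k0 -> r' \in K -> e r r' -> y \in C :\ r' ->
  r \notin cmp (C :\ r') y -> cmp (C :\ r') y \subset K :\ r'.
Proof.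
move=> cC rC defK r'K err' yC rn.
have r'C : r' \in C.
  by move: r'K; rewrite defK => /(subsetP (comp_sub _ _)); rewrite in_setD1 => /andP[].
have ne : r' != y by move: yC; rewrite in_setD1 eq_sym => /andP[].
have [w [er'w wC cw]] := first_step (cC _ _ r'C (subsetP (subsetDl _ _) _ yC)) ne.
have wc : w \in cmp (C :\ r') y.
  rewrite in_comp (connC esym) cw andbT in_setD1 wC andbT.
  by apply: contraTneq er'w => ->; rewrite eirr.
have wK : w \in cmp (C :\ r) k0.
  apply: comp_edge (_ : r' \in _) _ er'w; first by rewrite -defK.
  by rewrite in_setD1 wC andbT; apply: contraNneq rn => <-.
apply/subsetP=> z zc; rewrite in_setD1.
have -> /= : z != r'.
  by move: (subsetP (comp_sub _ _) _ zc); rewrite in_setD1 => /andP[].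
have : z \in cmp (C :\ r' :\ r) w.
  by rewrite -(comp_restrict esym) (comp_eq esym wc).
rewrite in_comp => /andP[zC czw].
rewrite defK -(comp_eq esym wK) in_comp.
have -> /= : z \in C :\ r by move: zC; rewrite !in_setD1 => /and3P[-> _ ->].
by apply: connect_mono czw; apply/subsetP => t; rewrite !in_setD1 => /and3P[-> _ ->].
Qed.

Lemma comp_of_root_disjoint C r K k0 r' y k : conn C -> r \in C ->
  K = cmp (C :\ r) k0 -> r' \in K -> e r r' ->
  r \in cmp (C :\ r') y -> k \in cmp (C :\ r') y -> k \notin K.
Proof.
move=> cC rC defK r'K err' rc kc; apply/negP => kK.
have kr : r != k.
  apply: contraTneq kK => <-; rewrite defK.
  by apply/negP => /(subsetP (comp_sub _ _)); rewrite in_setD1 eqxx.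
have crk : connect (ind (C :\ r')) r k.
  by move: kc; rewrite -(comp_eq esym rc) in_comp => /andP[].
have [w [erw wC cw]] := first_step crk kr.
have wCr : w \in C :\ r.
  rewrite in_setD1 (subsetP (subsetDl _ _) _ wC) andbT.
  by apply: contraTneq erw => ->; rewrite eirr.
have cw' : connect (ind (C :\ r)) w k.
  by apply: connect_mono cw; apply/subsetP => t; rewrite !in_setD1 => /and3P[-> _ ->].
have wK : w \in K.
  by rewrite defK -(comp_eq esym (_ : k \in _)) -?defK // in_comp wCr (connC esym) cw'.
have wr' : w != r' by move: wC; rewrite in_setD1 => /andP[].
have : connect (ind (C :\ r)) r' w.
  move: r'K wK; rewrite defK !in_comp => /andP[_ c1] /andP[_ c2].
  by apply: connect_trans c2; rewrite (connC esym).
by apply/negP; apply: (@no_two_nbrs _ r); rewrite ?in_setD1 ?eqxx // eq_sym.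
Qed.

Definition maxcomp C r := \max_(K in components e (C :\ r)) #|K|.

Lemma maxcomp_ge C r K : K \in components e (C :\ r) -> #|K| <= maxcomp C r.
Proof. by move=> KC; apply: (leq_bigmax_cond (F := fun K => #|K|)) KC. Qed.

Lemma shift_toward_heavy C r K r' : conn C -> r \in C ->
  K \in components e (C :\ r) -> #|C| < (#|K|).*2 -> r' \in K -> e r r' ->
  maxcomp C r' < #|K|.
Proof.
move=> cC rC /componentsP[k0 _ defK] hv r'K err'.
have K0 : 0 < #|K| by apply/card_gt0P; exists r'.
rewrite -(prednK K0) ltnS; apply/bigmax_leqP => K' /componentsP[y yC defK'].
rewrite -ltnS (prednK K0); case rK' : (r \in K').
  have dis : [disjoint K' & K].
    apply/pred0P => k /=; apply/negP => /andP[kK' kK]; rewrite defK' in rK' kK'.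
    by move: kK; apply/negP; apply: comp_of_root_disjoint cC rC defK r'K err' rK' kK'.
  have : #|K' :|: K| <= #|C|.
    apply: subset_leq_card; rewrite subUset defK' defK.
    by rewrite !(subset_trans (comp_sub _ _)) ?subsetDl.
  by rewrite cardsU (disjoint_setI0 dis) cards0 subn0; move: hv; lia.
have := comp_away_from_root cC rC defK r'K err' yC.
rewrite -defK' rK' => /(_ isT) /subset_leq_card.
by rewrite (cardsD1 r' K) r'K add1n ltnS.
Qed.

Lemma centroid C c0 : conn C -> c0 \in C ->
  exists2 r, r \in C & forall K, K \in components e (C :\ r) -> (#|K|).*2 <= #|C|.
Proof.
move=> cC c0C; case: (arg_minnP (maxcomp C) c0C) => r rC mn.
exists r => // K KC; rewrite leqNgt; apply/negP => hv.
case/componentsP: (KC) => y yC defK.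
have [r' r'K err'] := comp_has_nbr cC rC yC; rewrite -defK in r'K.
have r'C : r' \in C.
  by move: r'K; rewrite defK => /(subsetP (comp_sub _ _)); rewrite in_setD1 => /andP[].
have := shift_toward_heavy cC rC KC hv r'K err'.
by rewrite ltnNge (leq_trans (maxcomp_ge KC) (mn _ r'C)).
Qed.

Lemma shift_keeps_separation C r K r' a b : conn C -> r \in C ->
  K \in components e (C :\ r) -> r' \in K -> e r r' -> a \in K ->
  a \notin cmp (C :\ r) b -> a \notin cmp (C :\ r') b.
Proof.
move=> cC rC /componentsP[k0 _ defK] r'K err' aK sep; apply/negP => aK'.
have bC := comp_memx aK'.
case rK' : (r \in cmp (C :\ r') b).
  by move: aK; apply/negP; apply: comp_of_root_disjoint cC rC defK r'K err' rK' aK'.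
have := comp_away_from_root cC rC defK r'K err' bC.
rewrite rK' => /(_ isT) /subsetP /(_ b (comp_id bC)).
rewrite in_setD1 defK => /andP[_ bK].
by rewrite (comp_eq esym bK) -defK aK in sep.
Qed.

Lemma sepC A a b : (a \notin cmp A b) = (b \notin cmp A a).
Proof. by apply/negb_inj; rewrite !negbK; apply/idP/idP => /(comp_sym esym). Qed.

(* It minimises the largest
   component among the vertices separating a from b. *)
Lemma median C a b : conn C -> a \in C -> b \in C ->
  exists2 r, r \in C & forall K, K \in components e (C :\ r) ->
    ~~ ((a \in K) && (b \in K)) /\ ((#|K|).*2 <= #|C| \/ (a \notin K /\ b \notin K)).
Proof.
move=> cC aC bC.
pose Sep r := (r \in C) && (a \notin cmp (C :\ r) b).
have Sa : Sep a.
  by rewrite /Sep aC /=; apply/negP => /(subsetP (comp_sub _ _)); rewrite in_setD1 eqxx.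
case: (arg_minnP (maxcomp C) Sa) => r /andP[rC sr] mn.
exists r => // K KC; case/componentsP: (KC) => y yC defK.
have notboth : ~~ ((a \in K) && (b \in K)).
  apply/negP => /andP[aK bK]; move: bK; rewrite defK => bK.
  by rewrite (comp_eq esym bK) -defK aK in sr.
split => //; have [small|hv] := leqP ((#|K|).*2) #|C|; [by left|right].
have [r' r'K err'] := comp_has_nbr cC rC yC; rewrite -defK in r'K.
have r'C : r' \in C.
  by move: r'K; rewrite defK => /(subsetP (comp_sub _ _)); rewrite in_setD1 => /andP[].
have lt := shift_toward_heavy cC rC KC hv r'K err'.
have Sep' : Sep r' -> False.
  by move/mn; rewrite leqNgt (leq_trans lt (maxcomp_ge KC)).
split; apply/negP => xK; apply: Sep'; rewrite /Sep r'C /=.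
  exact: shift_keeps_separation cC rC KC r'K err' xK sr.
by rewrite sepC; apply: shift_keeps_separation cC rC KC r'K err' xK _; rewrite -sepC.
Qed.

End Subtrees.

(* Boundaries of components, admissible sets, and Steiner-closedness. *)
Section Admissible.
Variables (V : finType) (e : rel V).
Hypotheses (esym : symmetric e) (eirr : irreflexive e) (eacy : acyclic e).

Local Notation ind := (induced e).
Local Notation cmp := (Defs.comp e).
Implicit Types (A S K : {set V}) (x y z s : V).

Definition boundary A K := [set s in A | [exists k in K, e k s]].

Definition admissible A := forall x, x \notin A -> #|boundary A (cmp (~: A) x)| <= 2.

Lemma admissible0 : admissible set0.
Proof.
move=> x _; rewrite (_ : boundary _ _ = set0) ?cards0 //.
by apply/setP => s; rewrite !inE.
Qed.

Lemma path_avoid x u p :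
  path e u p -> x \notin u :: p -> connect (ind (~: [set x])) u (last u p).
Proof.
move=> pth xn; apply/connectP; exists p => //; apply: path_restrict => //.
apply/allP => z zin; change (z \in ~: [set x]); rewrite in_setC1.
by apply: contraNneq xn => <-.
Qed.

(* On a simple path from a to b, every vertex y reaches a or b in G - x,
   for any x != y: the part of the path on one side of y avoids x. *)
Lemma hull_side a b p y x : path e a p -> last a p = b -> uniq (a :: p) ->
  y \in a :: p -> x != y ->
  exists2 s, (s == a) || (s == b) & connect (ind (~: [set x])) y s.
Proof.
move=> pth lb up; case/predU1P => [->|yp] xy; first by exists a; rewrite ?eqxx.
case/splitPr: yp pth lb up => p1 p2; rewrite cat_path last_cat.
move=> /andP[pth1 pth2] lb up; case/andP: pth2 => ey pth2; rewrite /= in lb.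
case xin : (x \in a :: p1).
  exists b; first by rewrite eqxx orbT.
  rewrite -lb; apply: path_avoid pth2 _; apply: contraTN xin => xin.
  by move: up; rewrite -cat_cons cat_uniq => /and3P[_ /hasPn /(_ x xin) ->].
exists a; first by rewrite eqxx.
rewrite (connC esym); have := @path_avoid x a (rcons p1 y).
rewrite rcons_path pth1 ey last_rcons; apply => //.
by rewrite -rcons_cons mem_rcons inE negb_or xy xin.
Qed.

Lemma reach_boundary S x y s : x \notin S -> e x y -> s \in S ->
  connect (ind (~: [set x])) y s ->
  exists2 s', s' \in boundary S (cmp (~: S) x) & connect (ind (~: [set x])) y s'.
Proof.
move=> xS exy sS cys.
have xK : x \in cmp (~: S) x by apply: comp_id; rewrite in_setC.
have inB u v : u \in cmp (~: S) x -> v \in S -> e u v -> v \in boundary S (cmp (~: S) x).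
  by move=> uK vS euv; rewrite inE vS; apply/existsP; exists u; rewrite uK.
case yS : (y \in S); first by exists y; [exact: inB xK yS exy | exact: connect0].
have yK : y \in cmp (~: S) x by apply: comp_edge xK _ exy; rewrite in_setC yS.
case/connectP: cys => p pth sl.
elim: p y yS yK pth sl {exy} => [|v p IH] u uS uK /=.
  by move=> _ su; rewrite su uS in sS.
case/andP=> euv pth sl; have euv' : e u v by move: euv => /and3P[].
case vS : (v \in S); first by exists v; [exact: inB uK vS euv' | exact: connect1].
have vK : v \in cmp (~: S) x by apply: comp_edge uK _ euv'; rewrite in_setC vS.
have [s' s'b cvs] := IH v vS vK pth sl.
by exists s' => //; apply: connect_trans (connect1 euv) cvs.
Qed.

Lemma hull_nbr_boundary S x z : in_hull e S z -> e x z -> x \notin S ->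
  exists2 s, s \in boundary S (cmp (~: S) x) & connect (ind (~: [set x])) z s.
Proof.
case=> a [b [aS bS [p [pth lb up zin]]]] exz xS.
have xz : x != z by apply: contraTneq exz => ->; rewrite eirr.
have [s sab czs] := hull_side pth lb up zin xz.
by apply: reach_boundary xS exz _ czs; case/orP: sab => /eqP->.
Qed.

Lemma nbrs_reach_distinct x z1 z2 t1 t2 : e x z1 -> e x z2 -> z1 != z2 ->
  connect (ind (~: [set x])) z1 t1 -> connect (ind (~: [set x])) z2 t2 -> t1 != t2.
Proof.
move=> e1 e2 nz ct1 ct2; have nx : x \notin ~: [set x] by rewrite in_setC1 eqxx.
apply: contraNneq (no_two_nbrs esym eacy nx e1 e2 nz) => tt.
by apply: connect_trans ct1 _; rewrite tt (connC esym).
Qed.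

(* A hull vertex outside S has two distinct hull neighbours: its neighbours
   on a path between two vertices of S. *)
Lemma hull_two_nbrs S x : in_hull e S x -> x \notin S ->
  exists y1 y2, [/\ y1 != y2, e x y1 /\ in_hull e S y1 & e x y2 /\ in_hull e S y2].
Proof.
case=> a [b [aS bS [p [pth lb up xin]]]] xS.
have hull y : y \in a :: p -> in_hull e S y by exists a, b; split => //; exists p.
have xa : x != a by apply: contraNneq xS => ->.
move: xin; rewrite inE (negbTE xa) /= => xp.
case/splitPr: xp pth lb up hull => p1 p2 pth lb up hull.
case: p2 pth lb up hull => [|y2 p2] pth lb up hull.
  by rewrite last_cat /= in lb; rewrite lb bS in xS.
move: (pth); rewrite cat_path => /andP[_ /= /and3P[ey1x exy2 _]].
have y1in : last a p1 \in a :: p1 by apply: mem_last.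
move: up; rewrite -cat_cons cat_uniq => /and3P[_ hn _].
exists (last a p1), y2; split.
- apply: contraNneq (hasPn hn y2 _) => [<-//|]; by rewrite !inE eqxx orbT.
- by split; [rewrite esym | apply: hull; rewrite -cat_cons mem_cat y1in].
- by split => //; apply: hull; rewrite -cat_cons mem_cat !inE eqxx !orbT.
Qed.

(* Three distinct hull neighbours of x would reach three distinct boundary
   vertices of the component of x, which admissibility forbids. *)
Lemma hull_nbrs_le2 S x y1 y2 y3 : admissible S -> x \notin S ->
  e x y1 -> e x y2 -> e x y3 -> in_hull e S y1 -> in_hull e S y2 -> in_hull e S y3 ->
  y1 != y2 -> y1 != y3 -> y2 != y3 -> False.
Proof.
move=> adm xS e1 e2 e3 h1 h2 h3 d12 d13 d23.
have [s1 b1 c1] := hull_nbr_boundary h1 e1 xS.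
have [s2 b2 c2] := hull_nbr_boundary h2 e2 xS.
have [s3 b3 c3] := hull_nbr_boundary h3 e3 xS.
have : #|[set s1; s2; s3]| <= 2.
  apply: leq_trans (adm x xS); apply: subset_leq_card.
  by apply/subsetP => t; rewrite !in_setU !in_set1 => /orP[/orP[]|] /eqP->.
have t12 := nbrs_reach_distinct e1 e2 d12 c1 c2.
have t31 := nbrs_reach_distinct e3 e1 (_ : y3 != y1) c3 c1.
have t32 := nbrs_reach_distinct e3 e2 (_ : y3 != y2) c3 c2.
by rewrite setUC cardsU1 cards2 !inE negb_or t12 t31 ?t32 // eq_sym.
Qed.

Lemma admissible_steiner S : admissible S -> steiner_closed e S.
Proof.
move=> adm x hx xS; have [y1 [y2 [d12 [e1 h1] [e2 h2]]]] := hull_two_nbrs hx xS.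
exists y1, y2; split => // y exy hy.
have [->|d1] := eqVneq y y1; first by left.
have [->|d2] := eqVneq y y2; first by right.
by case: (hull_nbrs_le2 adm xS e1 e2 exy h1 h2 hy d12); rewrite eq_sym.
Qed.

End Admissible.

(* Choosing the root of a component C of G - A. *)
Section RootChoice.
Variables (V : finType) (e : rel V).
Hypotheses (esym : symmetric e) (eirr : irreflexive e) (eacy : acyclic e).

Local Notation cmp := (Defs.comp e).
Local Notation boundary := (boundary e).
Implicit Types (A C K : {set V}) (x y s r : V).

Definition good_root A C r :=
  r \in C /\ forall y, y \in C :\ r ->
    #|boundary (r |: A) (cmp (C :\ r) y)| <= 2 /\
    ((#|cmp (C :\ r) y|).*2 <= #|C| \/
     (#|boundary (r |: A) (cmp (C :\ r) y)| <= 1 /\ 2 <= #|boundary A C|)).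

Lemma boundary_child A x0 r y s :
  s \in boundary (r |: A) (cmp (cmp (~: A) x0 :\ r) y) -> s != r ->
  s \in boundary A (cmp (~: A) x0) /\
  exists2 k, k \in cmp (cmp (~: A) x0 :\ r) y & e k s.
Proof.
rewrite !inE => /andP[/predU1P[->|sA] /existsP[k /andP[kc eks]]].
  by rewrite eqxx.
move=> _; split; last by exists k.
rewrite sA /=; apply/existsP; exists k; rewrite eks andbT.
by move: (subsetP (comp_sub _ _) _ kc); rewrite in_setD1 => /andP[].
Qed.

Lemma attach_unique A x0 s a k : s \in A -> a \in cmp (~: A) x0 ->
  k \in cmp (~: A) x0 -> e a s -> e k s -> k = a.
Proof.
move=> sA aC kC eas eks; apply/eqP/negPn/negP => ne.
have sC : s \notin cmp (~: A) x0.
  by apply/negP => /(subsetP (comp_sub _ _)); rewrite in_setC sA.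
have := no_two_nbrs esym eacy sC (_ : e s k) (_ : e s a) ne.
by rewrite !(esym s) (comp_conn esym _ _ _ _ kC aC) => /(_ eks eas).
Qed.

Lemma centroid_good_root A x0 : x0 \notin A ->
  #|boundary A (cmp (~: A) x0)| <= 1 -> exists r, good_root A (cmp (~: A) x0) r.
Proof.
set C := cmp (~: A) x0 => x0A small.
have x0D : x0 \in ~: A by rewrite in_setC.
have [r rC hr] := centroid esym eirr eacy (comp_conn esym _ _) (comp_id x0D).
exists r; split => // y yC; split; last by left; apply: hr; apply: comp_components.
apply: leq_trans (_ : #|r |: boundary A C| <= 2).
  apply: subset_leq_card; apply/subsetP => s sb; rewrite in_setU1.
  by case: eqVneq => //= sr; case: (boundary_child sb sr).
by rewrite cardsU1; move: small; case: (r \in boundary A C); lia.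
Qed.

Lemma median_good_root A x0 :
  #|boundary A (cmp (~: A) x0)| = 2 -> exists r, good_root A (cmp (~: A) x0) r.
Proof.
set C := cmp (~: A) x0 => two.
have /cards2P [s1 [s2 [_ defB]]] : #|boundary A C| == 2 by rewrite two.
have : (s1 \in boundary A C) && (s2 \in boundary A C) by rewrite defB !inE !eqxx orbT.
rewrite !inE => /andP[/andP[s1A /existsP[a /andP[aC eas1]]]].
move=> /andP[s2A /existsP[b /andP[bC ebs2]]].
have [r rC hr] := median esym eirr eacy (comp_conn esym _ _) aC bC.
exists r; split => // y yC; have [nb hv] := hr _ (comp_components yC).
set K := cmp (C :\ r) y in nb hv *.
(* s1 (resp. s2) can be a boundary vertex of K only if a (resp. b) lies
   in K, since s1 and s2 have a single neighbour in C. *)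
have sub (P : {set V}) : (a \in K -> s1 \in P) -> (b \in K -> s2 \in P) ->
    boundary (r |: A) K \subset r |: P.
  move=> h1 h2; apply/subsetP => s sb; rewrite in_setU1; case: eqVneq => //= sr.
  have [sB [k kK eks]] := boundary_child sb sr.
  have kC : k \in C by move: (subsetP (comp_sub _ _) _ kK); rewrite in_setD1 => /andP[].
  move: sB; rewrite defB !inE => /orP[] /eqP ss; rewrite ss in eks *.
    by apply: h1; rewrite -(attach_unique s1A aC kC eas1 eks).
  by apply: h2; rewrite -(attach_unique s2A bC kC ebs2 eks).
have card2 s : #|r |: [set s]| <= 2 by rewrite cardsU1 cards1 addn1 ltnS leq_b1.
split.
  case/nandP: nb => [an|bn]; [apply: leq_trans (card2 s2) | apply: leq_trans (card2 s1)].
    by apply/subset_leq_card/sub; rewrite ?(negbTE an) // inE.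
  by apply/subset_leq_card/sub; rewrite ?(negbTE bn) // inE.
case: hv => [sm|[an bn]]; [by left | right]; split; last by rewrite two.
apply: leq_trans (_ : #|r |: set0| <= 1); last by rewrite cardsU1 cards0 addn0 leq_b1.
by apply/subset_leq_card/sub; rewrite ?(negbTE an) ?(negbTE bn).
Qed.

Lemma exists_good_root A x0 : x0 \notin A ->
  #|boundary A (cmp (~: A) x0)| <= 2 -> exists r, good_root A (cmp (~: A) x0) r.
Proof.
move=> x0A; rewrite leq_eqVlt ltnS => /orP[/eqP two|small].
  exact: median_good_root.
exact: centroid_good_root.
Qed.

(* Adding a good root to an admissible set keeps it admissible: the
   components of G - A other than C are unaffected. *)
Lemma admissible_step A x0 r : admissible e A ->
  good_root A (cmp (~: A) x0) r -> admissible e (r |: A).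
Proof.
set C := cmp (~: A) x0 => adm [rC hC] x.
rewrite in_setU1 negb_or => /andP[xr xA]; case xC : (x \in C).
  have xCr : x \in C :\ r by rewrite in_setD1 xr xC.
  by rewrite (comp_child esym rC xCr); case: (hC x xCr).
have xD : x \in ~: A by rewrite in_setC.
have rn : r \notin cmp (~: A) x.
  by apply/negP => rx; rewrite /C -(comp_eq esym rC) (comp_eq esym rx) comp_id in xC.
rewrite setC_U1 -(comp_restrict esym rn).
apply: leq_trans (adm x xA); apply: subset_leq_card; apply/subsetP => s.
rewrite !inE => /andP[/predU1P[->|sA] /existsP[k /andP[kc eks]]].
  by case/negP: rn; apply: comp_edge kc _ eks; apply: (subsetP (comp_sub _ _) _ rC).
by rewrite sA; apply/existsP; exists k; rewrite kc.
Qed.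

End RootChoice.

Section SearchTrees.
Variables (V : finType) (e : rel V).
Implicit Types (A C : {set V}) (r : V) (ch : seq (stree V)).

Lemma nodes_Node r ch z :
  (z \in nodes (Node r ch)) = (z == r) || has (fun c => z \in nodes c) ch.
Proof.
rewrite /= in_setU1; congr orb.
by elim: ch => [|c ch IH] /=; rewrite ?in_set0 // in_setU IH.
Qed.

Lemma height_Node r ch m :
  (forall c, List.In c ch -> height c <= m) -> height (Node r ch) <= m.+1.
Proof.
move=> h; rewrite /= ltnS; elim: ch h => //= c ch IH h.
by rewrite geq_max h ?IH //; auto.
Qed.

Lemma stc_Node A r ch : steiner_closed e (r |: A) ->
  (forall c, List.In c ch -> stc_from e (r |: A) c) -> stc_from e A (Node r ch).
Proof.
move=> sc h; split => //; elim: ch h => //= c ch IH h.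
by split; [apply: h; left | apply: IH => c0 hc0; apply: h; right].
Qed.

Lemma trees_of_sets (s : seq {set V}) (P : {set V} -> stree V -> Prop) :
  (forall K, K \in s -> exists t, nodes t = K /\ P K t) ->
  exists ch, map (@nodes V) ch = s /\ forall c, List.In c ch -> P (nodes c) c.
Proof.
elim: s => [|K s IH] h; first by exists [::].
have [t [nt pt]] := h K (mem_head _ _).
have [ch [mch pch]] := IH (fun K' K's => h K' (@mem_behead _ (K :: s) _ K's)).
exists (t :: ch); split; first by rewrite /= nt mch.
by move=> c /= [<-|/pch]; rewrite ?nt.
Qed.

Lemma node_of_children C r ch : r \in C ->
  map (@nodes V) ch = enum (components e (C :\ r)) ->
  (forall c, List.In c ch -> valid_stree e (nodes c) c) ->
  valid_stree e C (Node r ch) /\ nodes (Node r ch) = C.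
Proof.
move=> rC mch vch; split.
  by apply: valid_Node => // [|X]; rewrite mch ?enum_uniq ?mem_enum.
apply/setP => z; rewrite nodes_Node.
have -> : has (fun c => z \in nodes c) ch =
          has (fun K : {set V} => z \in K) (map (@nodes V) ch).
  by rewrite has_map.
rewrite mch.
apply/idP/idP.
  case/predU1P => [->//|/hasP[K]]; rewrite mem_enum => /componentsP[y _ ->].
  by move/(subsetP (comp_sub _ _)); rewrite in_setD1 => /andP[].
move=> zC; case: eqVneq => //= zr; apply/hasP; exists (Defs.comp e (C :\ r) z).
  by rewrite mem_enum; apply: comp_components; rewrite in_setD1 zr.
by apply: comp_id; rewrite in_setD1 zr.
Qed.

End SearchTrees.

Definition potential n b := 2 * trunc_log 2 n + (if 1 < b then 2 else 1).

Lemma potential_child nK bK nC bC : 0 < nK -> nK <= nC -> bK <= 2 ->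
  nK.*2 <= nC \/ (bK <= 1 /\ 2 <= bC) -> potential nK bK < potential nC bC.
Proof.
rewrite /potential => nK0 le_nKC bK2 [half|[bK1 bC2]].
  have : (trunc_log 2 nK).+1 <= trunc_log 2 nC.
    apply: trunc_log_max => //; rewrite expnS mul2n.
    by apply: leq_trans half; rewrite leq_double; apply: trunc_logP.
  by case: (ltnP 1 bK); case: (ltnP 1 bC); lia.
have := leq_trunc_log 2 le_nKC.
by case: (ltnP 1 bK); case: (ltnP 1 bC); lia.
Qed.

Lemma potential_gt0 n b : 0 < potential n b.
Proof. by rewrite /potential addn_gt0; case: ifP; rewrite orbT. Qed.

Section Construction.
Variables (V : finType) (e : rel V).
Hypotheses (esym : symmetric e) (eirr : irreflexive e) (eacy : acyclic e).

Local Notation cmp := (Defs.comp e).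

Lemma build n A x0 : #|cmp (~: A) x0| <= n -> admissible e A -> x0 \notin A ->
  exists t, [/\ valid_stree e (cmp (~: A) x0) t, nodes t = cmp (~: A) x0,
    stc_from e A t &
    height t <= potential #|cmp (~: A) x0| #|boundary e A (cmp (~: A) x0)|].
Proof.
have x0C (B : {set V}) x : x \notin B -> x \in cmp (~: B) x.
  by move=> xB; apply: comp_id; rewrite in_setC.
elim: n A x0 => [|n IH] A x0 hn adm x0A.
  by move: hn (x0C _ _ x0A); rewrite leqn0 => /eqP/cards0_eq->; rewrite in_set0.
set C := cmp (~: A) x0 in hn *; set p := potential #|C| #|boundary e A C|.
have [r gr] := exists_good_root esym eirr eacy x0A (adm x0 x0A); have [rC hr] := gr.
have adm' := admissible_step esym adm gr.
pose P K t := [/\ valid_stree e K t, stc_from e (r |: A) t & height t <= p.-1].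
have children K : K \in enum (components e (C :\ r)) -> exists t, nodes t = K /\ P K t.
  rewrite mem_enum => /componentsP[y yC ->].
  have yA' : y \notin r |: A.
    move: yC; rewrite in_setD1 in_setU1 negb_or => /andP[-> /(subsetP (comp_sub _ _))].
    by rewrite in_setC.
  have eqK := comp_child esym rC yC; rewrite -/C in eqK.
  have subK : cmp (C :\ r) y \subset C :\ r by apply: comp_sub.
  have small : #|cmp (~: (r |: A)) y| <= n.
    rewrite eqK -ltnS; apply: leq_trans hn; apply: leq_ltn_trans (subset_leq_card subK) _.
    by rewrite (cardsD1 r C) rC.
  have [t [vt nt st ht]] := IH _ _ small adm' yA'.
  rewrite eqK in vt nt ht; exists t; split => //; split => //.
  apply: leq_trans ht _; rewrite -ltnS prednK ?potential_gt0 //.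
  have [b2 alt] := hr y yC; apply: potential_child => //.
    by apply/card_gt0P; exists y; apply: comp_id.
  exact: subset_leq_card (subset_trans subK (subsetDl _ _)).
have [ch [mch hch]] := trees_of_sets children.
have [vt nt] := node_of_children rC mch (fun c hc => let: And3 v _ _ := hch c hc in v).
exists (Node r ch); split => //.
  by apply: stc_Node; [exact: admissible_steiner adm' | move=> c /hch[]].
by rewrite -(prednK (potential_gt0 _ _ : 0 < p)); apply: height_Node => c /hch[].
Qed.

End Construction.

Lemma INR_expn m k : INR (m ^ k) = pow (INR m) k.
Proof. by elim: k => //= k IH; rewrite expnS mulnE mult_INR IH. Qed.

Lemma trunc_log_le_log2R n : 0 < n -> Rle (INR (trunc_log 2 n)) (log2R (INR n)).
Proof.
move=> n0; set k := trunc_log 2 n.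
have two_pos : Rlt 0 (INR 2) by apply: (lt_0_INR 2); apply/ltP.
have ln2 : Rlt 0 (ln (INR 2)).
  by rewrite -ln_1; apply: ln_increasing; [exact: Rlt_0_1 | apply: lt_1_INR].
have pow_le : Rle (pow (INR 2) k) (INR n).
  by rewrite -INR_expn; apply: le_INR; apply/leP; exact: trunc_logP.
have : Rle (INR k * ln (INR 2)) (ln (INR n)).
  rewrite -ln_pow //.
  case/Rle_lt_or_eq_dec: pow_le => [lt|->]; last exact: Rle_refl.
  by apply/Rlt_le/ln_increasing => //; apply: pow_lt.
rewrite /log2R /Rdiv => le_ln; apply: (Rmult_le_reg_r (ln (INR 2))) => //.
by rewrite Rmult_assoc Rinv_l ?Rmult_1_r //; apply: Rgt_not_eq.
Qed.

Theorem mainTheorem7 (V : finType) (e : rel V) :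
  0 < #|V| -> is_tree e ->
  exists P : stree V,
    [/\ valid_stree e [set: V] P,
        steiner_closed_stree e P &
        Rle (INR (height P)) (Rplus (Rmult (INR 2) (log2R (INR #|V|))) (INR 2))].
Proof.
move=> n0 [[esym eirr] [conn_all acy]]; have [x0 _] := card_gt0P n0.
have compT : Defs.comp e (~: set0) x0 = [set: V].
  apply/setP => y; rewrite !inE (eq_connect (e' := e)) ?conn_all // => u v.
  by rewrite /induced /= !inE.
have x0n : x0 \notin (set0 : {set V}) by rewrite inE.
have [t [vt _ st ht]] := build esym eirr acy (max_card _) (admissible0 e) x0n.
rewrite compT in vt ht; exists t; split => //.
have bnd0 : boundary e set0 [set: V] = set0 by apply/setP => s; rewrite !inE.
move: ht; rewrite bnd0 cards0 cardsT /potential /= => /leP/le_INR ht.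
have := trunc_log_le_log2R n0; rewrite plus_INR mult_INR in ht.
by rewrite /= in ht *; lra.
Qed.
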